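(* Let $(L,\sim,\preceq,p)$ and $(L,\sim,\preceq,p')$ be planar dendritic systems with the same $L$, $\sim$ and $\preceq$. If $p(i,j)=p'(i,j)$ for all $i,j\in L$ (where $i$ denotes the class of $(i,i)$), then $p=p'$. That is, $p$ is uniquely determined by $\preceq$ and $\{p(i,j):i,j\in L\}$.
   Context: Let $L\subseteq\mathbb{N}$ be finite or countably infinite. A planar dendritic system $(L,\sim,\preceq,p)$ consists of an equivalence relation $\sim$ on $L\times L$, whose set of classes is denoted $T$ (the class of $(i,j)$ is written $(i,j)$); a partial order $\preceq$ on $T$; and a function $p:T\times T\to\{0,1,-1\}$, such that for all $i,j,k,\ell\in L$: (C1) $(i,j)\sim(j,i)$, and $(i,j)\sim(k,k)$ iff $i=j=k$; (C2) $(i,j)\preceq(i,i)$; (C3) $(i,j)\preceq(k,\ell)$ and $(k,\ell)\preceq(i,j)$ iff $(i,j)\sim(k,\ell)$; (C4) the $\preceq$-minimum of $\{(i,j),(k,\ell),(i,\ell),(i,k),(j,\ell),(j,k)\}$ exists in $T$; and for all $x,y,z\in T$: (P1) $p(x,y)=-p(y,x)$; (P2) $p(x,y)=0$ iff $x\preceq y$ or $y\preceq x$; (P3) if $p(x,y)=1$ and $p(y,z)=1$ then $p(x,z)=1$; (P4) if $p(x,y)=1$ and $y\preceq z$ then $p(x,z)=1$. The classes $(i,i)$ are the leaves, written $i$. *)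

From Stdlib Require Import ZArith List.
Open Scope Z_scope.

(* A planar dendritic system (L, ~, <=, p).
   - L : the index set, a subset of nat (given as a predicate).
   - The equivalence relation ~ on L x L is represented by its quotient map
     [cls : nat -> nat -> T] onto its set of classes T:
       (i,j) ~ (k,l)  <->  cls i j = cls k l   (for i j k l in L),
     and every element of T is the class of some (i,j) in L x L.
   - le : the partial order on T.
   - p  : T -> T -> Z with values in {0,1,-1}. *)


Record dendritic_system (L : nat -> Prop) (T : Type) (cls : nat -> nat -> T)
    (le : T -> T -> Prop) : Prop := {
  ds_surj : forall x : T, exists i j, L i /\ L j /\ cls i j = x;
  ds_refl : forall x, le x x;
  ds_trans : forall x y z, le x y -> le y z -> le x z;
  ds_antisym : forall x y, le x y -> le y x -> x = y;
  ds_C1_sym : forall i j, L i -> L j -> cls i j = cls j i;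
  ds_C1_diag : forall i j k, L i -> L j -> L k ->
      (cls i j = cls k k <-> (i = j /\ j = k));
  ds_C2 : forall i j, L i -> L j -> le (cls i j) (cls i i);
  ds_C3 : forall i j k l, L i -> L j -> L k -> L l ->
      (le (cls i j) (cls k l) /\ le (cls k l) (cls i j) <-> cls i j = cls k l);
  ds_C4 : forall i j k l, L i -> L j -> L k -> L l ->
      let S := cls i j :: cls k l :: cls i l :: cls i k :: cls j l :: cls j k :: nil in
      exists m, In m S /\ forall y, In y S -> le m y
}.

Record planar_dendritic_system (L : nat -> Prop) (T : Type) (cls : nat -> nat -> T)
    (le : T -> T -> Prop) (p : T -> T -> Z) : Prop := {
  pds_dendritic : dendritic_system L T cls le;
  pds_range : forall x y, p x y = 0 \/ p x y = 1 \/ p x y = -1;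
  pds_P1 : forall x y, p x y = - p y x;
  pds_P2 : forall x y, p x y = 0 <-> (le x y \/ le y x);
  pds_P3 : forall x y z, p x y = 1 -> p y z = 1 -> p x z = 1;
  pds_P4 : forall x y z, p x y = 1 -> le y z -> p x z = 1
}.

(* The sign p x y of two incomparable classes is inherited by all pairs above them:
   if p x y = 1, x <= a and y <= b, then p a b = 1.  Every class lies below a leaf
   (C2), so a nonzero p x y equals the value of p on two leaves, while p x y = 0 is
   decided by <= alone (P2). *)
From Stdlib Require Import ZArith Lia.
Open Scope Z_scope.

Arguments ds_surj {L T cls le}.
Arguments ds_trans {L T cls le}.
Arguments ds_C2 {L T cls le}.
Arguments pds_dendritic {L T cls le p}.
Arguments pds_range {L T cls le p}.
Arguments pds_P1 {L T cls le p}.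
Arguments pds_P2 {L T cls le p}.
Arguments pds_P3 {L T cls le p}.
Arguments pds_P4 {L T cls le p}.

Lemma ds_le_leaf {L T cls le} (D : dendritic_system L T cls le) (x : T) :
  exists i, L i /\ le x (cls i i).
Proof.
  destruct (ds_surj D x) as [i [j [Li [Lj <-]]]].
  exists i; split; [exact Li | exact (ds_C2 D i j Li Lj)].
Qed.

Section Sign.

Variables (L : nat -> Prop) (T : Type) (cls : nat -> nat -> T)
  (le : T -> T -> Prop) (p : T -> T -> Z).
Hypothesis Hp : planar_dendritic_system L T cls le p.

Lemma pds_eq1_le x y a b : p x y = 1 -> le x a -> le y b -> p a b = 1.
Proof.
  intros Hxy Hxa Hyb.
  assert (Hxb : p x b = 1) by exact (pds_P4 Hp x y b Hxy Hyb).
  assert (Hxa0 : p x a = 0) by (apply (pds_P2 Hp); left; exact Hxa).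
  destruct (pds_range Hp a b) as [Hab | [Hab | Hab]]; [| exact Hab |].
  - apply (pds_P2 Hp) in Hab as [Hab | Hba].
    + assert (p x b = 0)
        by (apply (pds_P2 Hp); left; exact (ds_trans (pds_dendritic Hp) _ _ _ Hxa Hab)).
      lia.
    + pose proof (pds_P4 Hp x b a Hxb Hba). lia.
  - assert (Hba : p b a = 1) by (rewrite (pds_P1 Hp); lia).
    pose proof (pds_P3 Hp x b a Hxb Hba). lia.
Qed.

Lemma pds_neq0_le x y a b : p x y <> 0 -> le x a -> le y b -> p a b = p x y.
Proof.
  intros Hxy Hxa Hyb.
  destruct (pds_range Hp x y) as [E | [E | E]]; [contradiction | |].
  - rewrite E; exact (pds_eq1_le x y a b E Hxa Hyb).
  - assert (Hyx : p y x = 1) by (rewrite (pds_P1 Hp); lia).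
    pose proof (pds_eq1_le y x b a Hyx Hyb Hxa).
    rewrite (pds_P1 Hp); lia.
Qed.

End Sign.

Arguments pds_neq0_le {L T cls le p}.

Theorem lemma2p2 (L : nat -> Prop) (T : Type) (cls : nat -> nat -> T)
    (le : T -> T -> Prop) (p p' : T -> T -> Z) :
  planar_dendritic_system L T cls le p ->
  planar_dendritic_system L T cls le p' ->
  (forall i j, L i -> L j -> p (cls i i) (cls j j) = p' (cls i i) (cls j j)) ->
  forall x y : T, p x y = p' x y.
Proof.
  intros Hp Hp' Hleaves x y.
  assert (Hzero : p x y = 0 <-> p' x y = 0)
    by (rewrite (pds_P2 Hp), (pds_P2 Hp'); reflexivity).
  destruct (Z.eq_dec (p x y) 0) as [E | E].
  - rewrite E; symmetry; apply Hzero; exact E.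
  - assert (E' : p' x y <> 0) by (rewrite <- Hzero; exact E).
    destruct (ds_le_leaf (pds_dendritic Hp) x) as [i [Li Hxi]].
    destruct (ds_le_leaf (pds_dendritic Hp) y) as [k [Lk Hyk]].
    rewrite <- (pds_neq0_le Hp x y _ _ E Hxi Hyk),
            <- (pds_neq0_le Hp' x y _ _ E' Hxi Hyk).
    exact (Hleaves i k Li Lk).
Qed.
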